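(* Let $n$ be an even positive integer, let $V_0=\{v\in\{-1,1\}^n : v_1=1,\ \sum_i v_i=0\}$, let $L\subset\mathbb{Z}^n$ be the lattice generated by $V_0$, let $P(V_0)=\{\sum_{v\in W}v : W\subseteq V_0\}$, and let $g(V_0)=\frac12\sum_{v\in V_0}v$. Let $R$ be a positive integer such that $\binom{n-2}{(n-2)/2}>4R(n-1)$. Then every $u\in L$ with $\|u-g(V_0)\|_\infty\le R-\frac n2$ satisfies $u\in P(V_0)$. *)

From mathcomp Require Import all_boot all_order all_algebra.
Set Implicit Arguments. Unset Strict Implicit. Unset Printing Implicit Defensive.
Import Order.TTheory GRing.Theory Num.Theory.
Local Open Scope ring_scope.

(* Sign vectors in {-1,1}^n are encoded by s : {ffun 'I_n -> bool},
   true |-> 1, false |-> -1. Coordinates are indexed 0..n-1, so the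
   paper's v_1 is the coordinate with index 0. *)
Definition sv (n : nat) (s : {ffun 'I_n -> bool}) (i : 'I_n) : int :=
  if s i then 1 else -1.

Definition V0 (n : nat) : {set {ffun 'I_n -> bool}} :=
  [set s : {ffun 'I_n -> bool} | [forall i : 'I_n, (val i == 0%N) ==> s i]
           && (\sum_(i < n) sv s i == 0)].

Definition in_lattice_V0 (n : nat) (u : 'I_n -> int) : Prop :=
  exists c : {ffun 'I_n -> bool} -> int,
    forall i : 'I_n, u i = \sum_(s in V0 n) c s * sv s i.

Definition in_P_V0 (n : nat) (u : 'I_n -> int) : Prop :=
  exists W : {set {ffun 'I_n -> bool}},
    W \subset V0 n /\ forall i : 'I_n, u i = \sum_(s in W) sv s i.

Definition gV0 (n : nat) (i : 'I_n) : rat :=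
  (1 / 2) * ((\sum_(s in V0 n) sv s i)%:~R).

(* Choose c \neq 1 maximising u_c among the coordinates other than the first, and
   let a (resp. b) count the vectors of V_0 with v_c = -1 (resp. v_c = 1). By the
   symmetry of V_0 under transpositions of coordinates 2..n, every coordinate of
   2 g(V_0) other than the first equals b - a, while n (a - b) = 2 a; the binomial
   hypothesis gives a > 4R(n-1), hence a - b > 2R, so b <= u_1 <= a + b and
   u_i >= b - a + 2 for i \neq 1, c. Take all b vectors with v_c = 1 together with
   u_1 - b vectors with v_c = -1 whose sum is at most 2 on each coordinate i \neq 1, c;
   their sum is then at most u off the coordinates 1 and c. Exchanging the entries c and i of suitable vectors raises coordinate i
   of the sum by 2 at the expense of coordinate c; u being in L has all coordinates
   of the parity of u_1, so this can be repeated until the sum equals u on every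
   coordinate i \neq 1, c, and the first coordinate and the total force equality
   at c as well. *)

From mathcomp Require Import all_boot all_order all_algebra.
From mathcomp Require Import fingroup perm.
From mathcomp Require Import zify ring lra.
From Stdlib Require Import Classical.

Set Implicit Arguments.
Unset Strict Implicit.
Unset Printing Implicit Defensive.
Import Order.TTheory GRing.Theory Num.Theory.
Local Open Scope ring_scope.

Lemma int_descent (T : Type) (P G : T -> Prop) (Q : T -> int) :
  (forall X, P X -> 0 <= Q X) ->
  (forall X, P X -> ~ G X -> exists2 Y, P Y & Q Y < Q X) ->
  forall X, P X -> exists2 Y, P Y & G Y.
Proof.
move=> Q_ge0 step X PX; have [m] := ubnP (absz (Q X)).
elim: m X PX => // m IH X PX ltQm.
have [GX|nGX] := classic (G X); first by exists X.
have [Y PY ltQ] := step X PX nGX.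
apply: (IH Y PY); have := Q_ge0 Y PY; have := Q_ge0 X PX; lia.
Qed.

Lemma exists_subset_card (T : finType) (A : {set T}) k : (k <= #|A|)%N ->
  exists2 X : {set T}, X \subset A & #|X| = k.
Proof.
move=> le_kA; have : (0 < #|[set X : {set T} | X \subset A & #|X| == k]|)%N.
  by rewrite cards_draws bin_gt0.
by rewrite card_gt0 => /set0Pn[X]; rewrite inE => /andP[XA /eqP]; exists X.
Qed.

Lemma ltr_sum_at (R : numDomainType) (I : finType) (D : {set I}) (F G : I -> R) i :
  i \in D -> (forall l, l \in D -> F l <= G l) -> F i < G i ->
  \sum_(l in D) F l < \sum_(l in D) G l.
Proof.
move=> iD leFG ltFGi; rewrite (bigD1 i iD) [X in _ < X](bigD1 i iD) /=.
by apply: ltr_leD => //; apply: ler_sum => l /andP[lD _]; apply: leFG.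
Qed.

Section SignVectors.

Variable n : nat.
Local Notation V := {ffun 'I_n -> bool}.

Definition colsum (W : {set V}) (l : 'I_n) : int := \sum_(t in W) sv t l.

Definition swap_coords (i j : 'I_n) (t : V) : V := [ffun l => t (tperm i j l)].

Lemma swap_coordsK i j : involutive (swap_coords i j).
Proof. by move=> t; apply/ffunP => l; rewrite !ffunE tpermK. Qed.

Lemma sv_swap_coords i j t l : sv (swap_coords i j t) l = sv t (tperm i j l).
Proof. by rewrite /sv ffunE. Qed.

Lemma sum_sv_swap_coords i j t : \sum_l sv (swap_coords i j t) l = \sum_l sv t l.
Proof.
rewrite (reindex_inj (can_inj (tpermK i j))) /=.
by apply: eq_bigr => l _; rewrite sv_swap_coords tpermK.
Qed.

Lemma colsumU (W1 W2 : {set V}) l : [disjoint W1 & W2] ->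
  colsum (W1 :|: W2) l = colsum W1 l + colsum W2 l.
Proof. by move=> dW; rewrite /colsum -bigU //; apply: eq_bigl => t; rewrite inE. Qed.

Lemma colsum_count (W : {set V}) l :
  colsum W l = #|W|%:Z - 2 * #|[set t in W | ~~ t l]|%:Z.
Proof.
rewrite /colsum (big_setID [set t : V | ~~ t l]) /=.
rewrite -(cardsID [set t : V | ~~ t l] W).
have -> : [set t in W | ~~ t l] = W :&: [set t : V | ~~ t l].
  by apply/setP => t; rewrite !inE.
rewrite (eq_bigr (fun=> -1)) => [|t]; last by rewrite !inE /sv => /andP[_ /negbTE ->].
rewrite [X in _ + X](eq_bigr (fun=> 1)) => [|t]; last first.
  by rewrite !inE /sv negbK => /andP[-> _].
by rewrite sumrN !sumr_const !natz PoszD; ring.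
Qed.

Lemma colsum_swap_closed (F : {set V}) i j :
  {in F, forall t, swap_coords i j t \in F} -> colsum F i = colsum F j.
Proof.
move=> FP; rewrite /colsum (reindex_inj (can_inj (swap_coordsK i j))) /=.
apply: eq_big => [t|t _]; last by rewrite sv_swap_coords tpermL.
by apply/idP/idP => [/FP|/FP]; rewrite ?swap_coordsK.
Qed.

Lemma sv_swap_exchange (i j l : 'I_n) (t : V) : t i -> ~~ t j ->
  sv (swap_coords i j t) l =
  if l == i then sv t l - 2 else if l == j then sv t l + 2 else sv t l.
Proof.
move=> ti tj; have ij : i != j by apply: contraNneq tj => <-.
rewrite sv_swap_coords /sv; case: tpermP => [->|->|/eqP/negbTE-> /eqP/negbTE->] //.
- by rewrite eqxx ti (negbTE tj).
- by rewrite eqxx eq_sym (negbTE ij) ti (negbTE tj).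
Qed.

Lemma swap_coords_id i j (t : V) : t i = t j -> swap_coords i j t = t.
Proof. by move=> tij; apply/ffunP => l; rewrite ffunE; case: tpermP => // ->. Qed.

Lemma colsum_exchange (W : {set V}) t i j l :
  t \in W -> swap_coords i j t \notin W -> t i -> ~~ t j ->
  colsum (swap_coords i j t |: W :\ t) l =
  if l == i then colsum W l - 2 else if l == j then colsum W l + 2 else colsum W l.
Proof.
move=> tW sW ti tj; rewrite /colsum big_setU1 /=; last by rewrite !inE negb_and sW orbT.
rewrite [in RHS](big_setD1 t tW) /= sv_swap_exchange //.
by case: ifP => _; [|case: ifP => _]; ring.
Qed.

Lemma exists_exchangeable (W : {set V}) i j : colsum W j < colsum W i ->
  exists2 t, t \in W & [/\ t i, ~~ t j & swap_coords i j t \notin W].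
Proof.
have [/exists_inP[t tW /and3P[ti tj sW]] _|/exists_inPn none] :=
  boolP [exists t in W, [&& t i, ~~ t j & swap_coords i j t \notin W]].
  by exists t.
move=> lt; exfalso; move: lt; apply/negP; rewrite -leNgt.
(* The members whose swap stays in W form a swap-closed family, which contributes
   equally to both coordinates; every other member has t i = false, t j = true. *)
set S := [set t in W | swap_coords i j t \in W].
rewrite /colsum (big_setID S) [X in _ <= X](big_setID S) /=.
apply: lerD.
  suff : colsum (W :&: S) i = colsum (W :&: S) j by rewrite /colsum => ->.
  apply: colsum_swap_closed => t; rewrite !inE => /and3P[tW _ sW].
  by rewrite sW swap_coordsK tW.
apply: ler_sum => t; rewrite !inE => /andP[+ tW]; rewrite tW /= => sW.
have := none t tW; rewrite sW andbT.
rewrite /sv; case ti: (t i); case tj: (t j) => //= _; move: sW;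
  by rewrite swap_coords_id ?tW ?ti ?tj.
Qed.

Lemma exchange_step (F W : {set V}) i j :
  {in F, forall t, swap_coords i j t \in F} -> W \subset F ->
  colsum W j < colsum W i ->
  exists W' : {set V}, [/\ W' \subset F, #|W'| = #|W| & forall l, colsum W' l =
    if l == i then colsum W l - 2 else if l == j then colsum W l + 2 else colsum W l].
Proof.
move=> Fswap WF /exists_exchangeable[t tW [ti tj sW]].
exists (swap_coords i j t |: W :\ t); split.
- by rewrite subUset sub1set Fswap ?(subsetP WF) //= (subset_trans (subD1set W t)).
- by rewrite cardsU1 !inE negb_and sW orbT (cardsD1 t W) tW.
- by move=> l; apply: colsum_exchange.
Qed.

Lemma balanced_subset (F : {set V}) (D : {set 'I_n}) k :
  {in D &, forall i j, {in F, forall t, swap_coords i j t \in F}} ->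
  {in F, forall t, \sum_(l in D) sv t l = 0} -> (k <= #|F|)%N ->
  exists X : {set V}, [/\ X \subset F, #|X| = k & {in D, forall i, colsum X i <= 2}].
Proof.
move=> Fswap Fbal /exists_subset_card[X0 X0F cardX0].
(* Descent on Q: a coordinate above 2 forces a negative one (the columns sum to 0
   on D), and an exchange between the two lowers Q. *)
pose Q (X : {set V}) : int := \sum_(l in D) `|colsum X l|.
have [X [XF cardX] Xbal] : exists2 X : {set V}, X \subset F /\ #|X| = k &
    {in D, forall i, colsum X i <= 2}; last by exists X.
apply: (@int_descent _ (fun X : {set V} => X \subset F /\ #|X| = k)
  (fun X : {set V} => {in D, forall i, colsum X i <= 2}) Q _ _ X0 (conj X0F cardX0)).
  by move=> X _; apply: sumr_ge0.
move=> X [XF cardX] unbal.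
have [i iD lt2i] : exists2 i, i \in D & 2 < colsum X i.
  apply: NNPP => none; apply: unbal => i iD; rewrite leNgt; apply/negP => lt2i.
  by apply: none; exists i.
have sum0 : \sum_(l in D) colsum X l = 0.
  by rewrite /colsum exchange_big big1 // => t /(subsetP XF) /Fbal.
have [j jD ltj0] : exists2 j, j \in D & colsum X j < 0.
  apply: NNPP => none; move: sum0; rewrite (bigD1 i iD) /=.
  set rest := (X in _ + X = _); suff : 0 <= rest by lia.
  apply: sumr_ge0 => l /andP[lD _]; rewrite leNgt; apply/negP => ltl0.
  by apply: none; exists l.
have [|Y [YF cardY colY]] := @exchange_step F X i j (Fswap i j iD jD) XF; first lia.
exists Y; first by rewrite cardY.
rewrite /Q; apply: (@ltr_sum_at _ _ D _ _ i iD) => [l _|]; rewrite colY.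
  by case: eqP => [->|_]; [lia | case: eqP => [->|_]; lia].
by rewrite eqxx; lia.
Qed.

End SignVectors.

Lemma dist_half_to_int (x y : int) (R n : nat) :
  `|x%:~R - 1 / 2 * y%:~R| <= R%:R - n%:R / 2 :> rat ->
  `|2 * x - y| <= 2 * R%:Z - n%:Z.
Proof.
rewrite !ler_norml => /andP[lo hi]; rewrite -!(ler_int rat).
rewrite !(rmorphD, rmorphB, rmorphM, rmorphN, rmorph1) /=.
have natE k : (k%:Z)%:~R = k%:R :> rat by [].
by rewrite !natE; apply/andP; split; lra.
Qed.

(* With a = #|V0_neg c| and b = #|V0_pos c|, 2 g(V_0) has first coordinate a + b
   and b - a elsewhere. *)
Lemma V0_target_bounds (n R a b u0 ui : int) :
  4 <= n -> 0 <= R -> 0 <= b -> 4 * R * (n - 1) < a ->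
  (n - 1) * (b - a) = - (a + b) ->
  `|2 * u0 - (a + b)| <= 2 * R - n -> `|2 * ui - (b - a)| <= 2 * R - n ->
  [/\ b <= u0, u0 <= a + b & b - a + 2 <= ui].
Proof.
move=> n4 R0 b0 big_a sum_eq d0 di.
have two_a : n * (a - b) = 2 * a by lia.
have gap : 2 * R < a - b.
  rewrite ltNge; apply/negP => small_gap.
  have : n * (a - b) <= n * (2 * R) by apply: ler_wpM2l; lia.
  have : R * 4 <= R * n by apply: ler_wpM2l; lia.
  lia.
by split; lia.
Qed.

Section V0.

Variable m : nat.
Local Notation n := m.+1.
Local Notation V := {ffun 'I_n -> bool}.

Definition others (c : 'I_n) : {set 'I_n} := [set l | (l != ord0) && (l != c)].
Definition V0_pos (c : 'I_n) : {set V} := [set t in V0 n | t c].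
Definition V0_neg (c : 'I_n) : {set V} := [set t in V0 n | ~~ t c].

Lemma in_others (c l : 'I_n) : (l \in others c) = (l != ord0) && (l != c).
Proof. by rewrite inE. Qed.

Lemma inV0 (t : V) : (t \in V0 n) = t ord0 && (\sum_i sv t i == 0).
Proof.
rewrite inE; congr andb; apply/forallP/idP => [/(_ ord0) //|t0 i].
by apply/implyP => i0; rewrite (_ : i = ord0) //; apply: val_inj; apply/eqP.
Qed.

Lemma sv_ord0 (t : V) : t \in V0 n -> sv t ord0 = 1.
Proof. by rewrite inV0 /sv => /andP[-> _]. Qed.

Lemma swap_coords_V0 (i j : 'I_n) (t : V) : i != ord0 -> j != ord0 -> t \in V0 n ->
  swap_coords i j t \in V0 n.
Proof.
move=> i0 j0; rewrite !inV0 => /andP[t0 sum0].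
by rewrite ffunE tpermD // t0 sum_sv_swap_coords.
Qed.

Lemma sum_split_others (x : 'I_n -> int) (c : 'I_n) : c != ord0 ->
  \sum_l x l = x ord0 + x c + \sum_(l in others c) x l.
Proof.
move=> c0; rewrite (bigD1 ord0) //= (bigD1 c) //= addrA.
by congr (_ + _); apply: eq_bigl => l; rewrite inE andbC.
Qed.

Lemma card_others (c : 'I_n) : c != ord0 -> #|others c| = (n - 2)%N.
Proof.
move=> c0; have -> : others c = [set~ ord0] :\ c.
  by apply/setP => l; rewrite !inE andbC.
have := cardsD1 c [set~ ord0]; rewrite cardsC1 card_ord in_setC1 c0 /=.
by move: #|_| => k; lia.
Qed.

Lemma sum_others_sv (t : V) (c : 'I_n) : t \in V0 n -> c != ord0 ->
  \sum_(l in others c) sv t l = - 1 - sv t c.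
Proof.
move=> tV c0; move: (tV); rewrite inV0 (sum_split_others _ c0) sv_ord0 //.
by case/andP=> _ /eqP; lia.
Qed.

Lemma colsum_ord0 (W : {set V}) : W \subset V0 n -> colsum W ord0 = #|W|%:Z.
Proof.
move=> /subsetP WV; rewrite /colsum (eq_bigr (fun=> 1)) => [|t /WV/sv_ord0 //].
by rewrite sumr_const natz.
Qed.

Lemma sum_colsum_V0 (W : {set V}) : W \subset V0 n -> \sum_l colsum W l = 0.
Proof.
move=> /subsetP WV; rewrite /colsum exchange_big big1 // => t /WV.
by rewrite inV0 => /andP[_ /eqP].
Qed.

Lemma colsum_V0_nonzero (i : 'I_n) : i != ord0 ->
  m%:Z * colsum (V0 n) i = - #|V0 n|%:Z.
Proof.
move=> i0; have := sum_colsum_V0 (subxx (V0 n)).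
rewrite (bigD1 ord0) //= colsum_ord0 // (eq_bigr (fun=> colsum (V0 n) i)).
  by rewrite sumr_const cardC1 card_ord -mulr_natl natz /=; lia.
move=> l l0; apply: colsum_swap_closed => t; exact: swap_coords_V0.
Qed.

Lemma V0_posUneg (c : 'I_n) : V0_pos c :|: V0_neg c = V0 n.
Proof. by apply/setP => t; rewrite !inE -andb_orr orbN andbT. Qed.

Lemma disjoint_V0_pos_neg (c : 'I_n) : [disjoint V0_pos c & V0_neg c].
Proof.
by rewrite -setI_eq0; apply/eqP/setP => t; rewrite !inE andbACA andbN andbF.
Qed.

Lemma card_V0 (c : 'I_n) : #|V0 n| = (#|V0_pos c| + #|V0_neg c|)%N.
Proof.
rewrite -(V0_posUneg c) cardsU; move: (disjoint_V0_pos_neg c).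
by rewrite -setI_eq0 => /eqP ->; rewrite cards0 subn0.
Qed.

Lemma colsum_V0_at (c : 'I_n) : colsum (V0 n) c = #|V0_pos c|%:Z - #|V0_neg c|%:Z.
Proof.
rewrite -{1}(V0_posUneg c) colsumU ?disjoint_V0_pos_neg // /colsum.
rewrite (eq_bigr (fun=> 1)) => [|t]; last by rewrite inE /sv => /andP[_ ->].
rewrite [X in _ + X](eq_bigr (fun=> -1)) => [|t]; last first.
  by rewrite inE /sv => /andP[_ /negbTE ->].
by rewrite sumrN !sumr_const !natz.
Qed.

Lemma colsum_V0_others (c i : 'I_n) : c != ord0 -> i \in others c ->
  colsum (V0 n) i = #|V0_pos c|%:Z - #|V0_neg c|%:Z.
Proof.
move=> c0; rewrite in_others => /andP[i0 _]; rewrite -colsum_V0_at.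
by apply: colsum_swap_closed => t; apply: swap_coords_V0.
Qed.

Lemma swap_coords_V0_neg (c i j : 'I_n) (t : V) : i \in others c -> j \in others c ->
  t \in V0_neg c -> swap_coords i j t \in V0_neg c.
Proof.
rewrite !in_others => /andP[i0 ic] /andP[j0 jc] /setIdP[tV tc].
by apply/setIdP; split; [apply: swap_coords_V0 | rewrite ffunE tpermD // eq_sym].
Qed.

Lemma sum_others_V0_neg (c : 'I_n) (t : V) : c != ord0 -> t \in V0_neg c ->
  \sum_(l in others c) sv t l = 0.
Proof.
move=> c0; rewrite inE => /andP[tV tc].
by rewrite sum_others_sv // /sv (negbTE tc); lia.
Qed.

Lemma colsum_V0_neg_others (c i : 'I_n) : c != ord0 -> i \in others c ->
  colsum (V0_neg c) i = 0.
Proof.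
move=> c0 iD.
have : \sum_(l in others c) colsum (V0_neg c) l = 0.
  by rewrite /colsum exchange_big big1 // => t; apply: sum_others_V0_neg.
rewrite (eq_bigr (fun=> colsum (V0_neg c) i)) => [|l lD]; last first.
  by apply: colsum_swap_closed => t; apply: swap_coords_V0_neg.
have D_gt0 : (0 < #|others c|)%N by apply/card_gt0P; exists i.
rewrite sumr_const -mulr_natl => /eqP.
by rewrite mulf_eq0 pnatr_eq0 eqn0Ngt D_gt0 => /eqP.
Qed.

Lemma binomial_le_card_V0_neg (c : 'I_n) p : c != ord0 -> (p.*2.+2 = n)%N ->
  ('C(n - 2, p) <= #|V0_neg c|)%N.
Proof.
move=> c0 np; rewrite -(card_others c0) -cards_draws.
(* A p-subset S of [others c] yields the vector equal to 1 exactly on ord0 and S. *)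
pose mk (S : {set 'I_n}) : V := [ffun l => (l == ord0) || (l \in S)].
have notin_sub (S : {set 'I_n}) x : S \subset others c -> x \notin others c -> x \notin S.
  by move=> /subsetP SD; apply: contra (SD x).
have ord0_out : ord0 \notin others c by rewrite in_others eqxx.
have c_out : c \notin others c by rewrite in_others eqxx andbF.
have mk_inj : {in [set S : {set 'I_n} | S \subset others c & #|S| == p] &, injective mk}.
  move=> S1 S2; rewrite !inE => /andP[S1D _] /andP[S2D _] /ffunP eqS.
  apply/setP => l; have := eqS l; rewrite !ffunE.
  case: (eqVneq l ord0) => [-> _|_ //].
  by rewrite !(negbTE (notin_sub _ _ _ ord0_out)).
rewrite -(card_in_imset mk_inj); apply: subset_leq_card; apply/subsetP => s.
case/imsetP=> S + ->{s}; rewrite inE => /andP[SD /eqP cardS].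
apply/setIdP; split; last first.
  by rewrite ffunE (negbTE c0) (notin_sub _ _ SD c_out).
rewrite inV0 ffunE eqxx /=; apply/eqP.
rewrite (sum_split_others _ c0) /sv !ffunE eqxx (negbTE c0).
rewrite (negbTE (notin_sub _ _ SD c_out)) /=.
rewrite (big_setID S) /= (setIidPr SD) (eq_bigr (fun=> 1)) => [|l lS]; last first.
  by rewrite ffunE lS orbT.
rewrite [X in _ + (_ + X)](eq_bigr (fun=> -1)) => [|l]; last first.
  by rewrite !inE ffunE => /andP[/negbTE -> /andP[/negbTE -> _]].
rewrite sumrN !sumr_const !natz cardsDS // card_others // cardS.
by move: np; rewrite -addnn; lia.
Qed.

Lemma in_lattice_V0_sum (u : 'I_n -> int) : in_lattice_V0 u -> \sum_i u i = 0.
Proof.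
case=> coef uE; rewrite (eq_bigr _ (fun i _ => uE i)) exchange_big big1 // => t.
by rewrite -mulr_sumr inV0 => /andP[_ /eqP ->]; rewrite mulr0.
Qed.

Lemma in_lattice_V0_parity (u : 'I_n -> int) : in_lattice_V0 u ->
  forall i, exists z, u i = u ord0 - 2 * z.
Proof.
case=> coef uE i; exists (\sum_(t in V0 n) coef t * (~~ t i)%:R).
rewrite !uE mulr_sumr -sumrB; apply: eq_bigr => t tV.
by rewrite (sv_ord0 tV) /sv; case: (t i) => /=; ring.
Qed.

Lemma exists_lower_family (c : 'I_n) (R : nat) (u : 'I_n -> int) :
  (3 < n)%N -> c != ord0 -> (4 * R * (n - 1) < #|V0_neg c|)%N ->
  (forall i, `|2 * u i - colsum (V0 n) i| <= 2 * R%:Z - n%:Z) ->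
  exists W : {set V},
    [/\ W \subset V0 n, #|W|%:Z = u ord0 & {in others c, forall i, colsum W i <= u i}].
Proof.
move=> n4 c0 big_neg near_u.
have := card_V0 c; have := colsum_V0_nonzero c0; have := colsum_V0_others c0.
rewrite colsum_V0_at; set a := #|V0_neg c|; set b := #|V0_pos c| => colV0 sum_eq cardV0.
have big_a : 4 * R%:Z * (n%:Z - 1) < a%:Z.
  by move: big_neg; rewrite -ltz_nat !PoszM subzn.
have sum_eq' : (n%:Z - 1) * (b%:Z - a%:Z) = - (a%:Z + b%:Z).
  by move: sum_eq; rewrite cardV0 PoszD; lia.
have near0 : `|2 * u ord0 - (a%:Z + b%:Z)| <= 2 * R%:Z - n%:Z.
  by have := near_u ord0; rewrite colsum_ord0 // cardV0 PoszD; lia.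
have bounds i : colsum (V0 n) i = b%:Z - a%:Z ->
    [/\ b%:Z <= u ord0, u ord0 <= a%:Z + b%:Z & b%:Z - a%:Z + 2 <= u i].
  by move=> coli; apply: V0_target_bounds big_a sum_eq' near0 _; rewrite -?coli.
have [b_le_u0 u0_le _] := bounds c (colsum_V0_at c).
have [k u0E] : exists k : nat, u ord0 = k%:Z.
  by exists `|u ord0|%N; rewrite gez0_abs //; lia.
have neg_swap : {in others c &, forall i j,
    {in V0_neg c, forall t, swap_coords i j t \in V0_neg c}}.
  by move=> i j iD jD t; apply: swap_coords_V0_neg.
have neg_bal : {in V0_neg c, forall t, \sum_(l in others c) sv t l = 0}.
  by move=> t; apply: sum_others_V0_neg.
have le_ka : (k - b <= a)%N by rewrite leq_subLR; move: u0_le; rewrite u0E; lia.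
have [X [XA cardX Xbal]] := balanced_subset neg_swap neg_bal le_ka.
have disjX : [disjoint V0_pos c & X] := disjointWr XA (disjoint_V0_pos_neg c).
exists (V0_pos c :|: X); split.
- by rewrite -(V0_posUneg c) setUS.
- rewrite cardsU; move: disjX; rewrite -setI_eq0 => /eqP ->.
  by rewrite cards0 subn0 cardX u0E subnKC //; move: b_le_u0; rewrite u0E lez_nat.
- move=> i iD; have [_ _ low_ui] := bounds i (colV0 i iD).
  have := colsumU i (disjoint_V0_pos_neg c).
  rewrite V0_posUneg colV0 // colsum_V0_neg_others // colsumU //.
  by have := Xbal i iD; lia.
Qed.

Lemma colsum_excess (c : 'I_n) (u : 'I_n -> int) (W : {set V}) :
  c != ord0 -> \sum_l u l = 0 -> W \subset V0 n -> #|W|%:Z = u ord0 ->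
  colsum W c - u c = \sum_(l in others c) (u l - colsum W l).
Proof.
move=> c0 su WV cardW; have := sum_colsum_V0 WV; move: su.
rewrite sumrB (sum_split_others u c0) (sum_split_others (colsum W) c0).
rewrite colsum_ord0 // cardW.
set su' := \sum_(i in others c) u i; set sw := \sum_(i in others c) colsum W i.
lia.
Qed.

Lemma exact_of_lower_family (c : 'I_n) (u : 'I_n -> int) (W0 : {set V}) :
  c != ord0 -> \sum_l u l = 0 -> (forall i, exists z, u i = u ord0 - 2 * z) ->
  {in others c, forall i, u i <= u c} ->
  W0 \subset V0 n -> #|W0|%:Z = u ord0 -> {in others c, forall i, colsum W0 i <= u i} ->
  exists2 W : {set V}, W \subset V0 n & forall i, colsum W i = u i.
Proof.
move=> c0 su u_parity u_max W0V cardW0 W0_le.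
pose P (W : {set V}) := [/\ W \subset V0 n, #|W|%:Z = u ord0 &
  {in others c, forall i, colsum W i <= u i}].
(* Q W is also the excess of colsum W over u at c (colsum_excess), so a coordinate
   below u can borrow 2 from c, which is above it by maximality of u c. *)
pose Q (W : {set V}) : int := \sum_(l in others c) (u l - colsum W l).
have Q_ge0 W : P W -> 0 <= Q W.
  by case=> _ _ W_le; apply: sumr_ge0 => l lD; rewrite subr_ge0 W_le.
have [W [WV cardW _] W_eq] :
    exists2 W, P W & {in others c, forall i, colsum W i = u i}.
  apply: (@int_descent _ P _ Q Q_ge0 _ W0); last by split.
  move=> W PW not_eq; have [WV cardW W_le] := PW.
  have [i iD lt_i] : exists2 i, i \in others c & colsum W i < u i.
    apply: NNPP => none; apply: not_eq => i iD; apply/eqP; rewrite eq_le W_le //=.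
    by rewrite leNgt; apply/negP => lt_i; apply: none; exists i.
  have le2_i : colsum W i + 2 <= u i.
    by have [z uz] := u_parity i; move: lt_i; rewrite colsum_count uz cardW; lia.
  have lt_ci : colsum W i < colsum W c.
    have := colsum_excess c0 su WV cardW; have := Q_ge0 W PW; have := u_max i iD.
    by rewrite /Q; lia.
  have [i0 ic] : i != ord0 /\ i != c by apply/andP; rewrite -in_others.
  have swapV0 : {in V0 n, forall t, swap_coords c i t \in V0 n}.
    by move=> t; apply: swap_coords_V0.
  have [W' [W'V cardW' colW']] := exchange_step swapV0 WV lt_ci.
  have colW'_others l : l \in others c ->
      colsum W' l = if l == i then colsum W l + 2 else colsum W l.
    by rewrite in_others => /andP[_ lc]; rewrite colW' (negbTE lc).
  exists W'.
    split=> //; first by rewrite cardW'.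
    by move=> l lD; rewrite colW'_others //; case: eqP => [->|_]; rewrite ?W_le.
  rewrite /Q; apply: (@ltr_sum_at _ _ _ _ _ i iD) => [l lD|].
    by rewrite colW'_others //; case: eqP => _; lia.
  by rewrite colW'_others // eqxx; lia.
exists W => // l; have [->|l0] := eqVneq l ord0; first by rewrite colsum_ord0.
have [->|lc] := eqVneq l c; last by apply: W_eq; rewrite in_others l0.
apply/eqP; rewrite -subr_eq0 colsum_excess // big1 // => i iD.
by rewrite W_eq // subrr.
Qed.

End V0.

Theorem lemma4p2 (n R : nat) (hn : (0 < n)%N) (hev : ~~ odd n) (hR : (0 < R)%N)
  (hbin : ('C(n - 2, (n - 2)./2) > 4 * R * (n - 1))%N)
  (u : 'I_n -> int) (hu : in_lattice_V0 u)
  (hdist : forall i : 'I_n, `|(u i)%:~R - gV0 i| <= R%:R - n%:R / 2 :> rat) :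
  in_P_V0 u.
Proof.
have n4 : (3 < n)%N.
  by move: hn hev hbin; clear -hR; case: n => [|[|[|[|n]]]] //= _ _; rewrite bin0; lia.
have half_n : ((n - 2)./2).*2.+2 = n.
  have := odd_double_half (n - 2); rewrite oddB; last lia.
  by rewrite (negbTE hev) /= add0n => ->; rewrite -addn2 subnK //; lia.
move: u hu hdist; case: n hn hev hbin n4 half_n => // m _ _ hbin n4 half_n u hu hdist.
have [c c0 u_max] : exists2 c : 'I_m.+1, c != ord0 & forall i, i != ord0 -> u i <= u c.
  have max0 : ord_max != ord0 :> 'I_m.+1 by rewrite -val_eqE /=; lia.
  by case: (arg_maxP (P := [pred i | i != ord0]) u max0) => c c0 cmax; exists c.
have big_neg : (4 * R * (m.+1 - 1) < #|V0_neg c|)%N.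
  exact: leq_trans hbin (binomial_le_card_V0_neg c0 half_n).
have near_u i := dist_half_to_int (hdist i).
have [W0 [W0V cardW0 W0_le]] := exists_lower_family n4 c0 big_neg near_u.
have u_max_others : {in others c, forall i, u i <= u c}.
  by move=> i; rewrite in_others => /andP[i0 _]; apply: u_max.
have [W WV Wu] := exact_of_lower_family c0 (in_lattice_V0_sum hu)
  (in_lattice_V0_parity hu) u_max_others W0V cardW0 W0_le.
by exists W; split=> // i; rewrite -Wu.
Qed.
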